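(* Let $I$ be an ideal of a ring $R$. The following are equivalent: (1) $R$ is uniquely weakly $I$-clean; (2) $R/I$ is semi Boolean and idempotents can be lifted uniquely weakly modulo $I$; (3) $R/I$ is semi Boolean, idempotents can be lifted weakly modulo $I$, $R$ is abelian, and $I$ is idempotent free; (4) for each $a\in R$ there exists a central idempotent $e\in R$ such that $a-e\in I$ or $a+e\in I$, and $I$ is idempotent free.
   Context: All rings are associative with identity; $Idem(R)$ is the set of idempotents. $R$ is uniquely weakly $I$-clean if for every $x\in R$ there exists a unique $e\in Idem(R)$ with $x-e\in I$ or $x+e\in I$. A ring $A$ is semi Boolean if for every $x\in A$, $x^2=x$ or $x^2=-x$. Idempotents can be lifted weakly modulo $I$ if for every $x\in R$ with $x^2-x\in I$ there is $e\in Idem(R)$ with $x-e\in I$ or $x+e\in I$; lifted uniquely weakly if such $e$ is moreover unique. An ideal is idempotent free if the only idempotent it contains is $0$. $R$ is abelian if all idempotents are central. *)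

From HB Require Import structures.
From mathcomp Require Import all_boot all_order all_algebra.
Set Implicit Arguments. Unset Strict Implicit. Unset Printing Implicit Defensive.
Import GRing.Theory.
Local Open Scope ring_scope.

Definition idem {R : pzRingType} (e : R) : Prop := e * e = e.

Definition is_ideal {R : pzRingType} (I : {pred R}) : Prop :=
  [/\ 0 \in I,
      (forall x y, x \in I -> y \in I -> x - y \in I),
      (forall r x, x \in I -> r * x \in I) &
      (forall r x, x \in I -> x * r \in I)].

Definition uniquely_weakly_clean {R : pzRingType} (I : {pred R}) : Prop :=
  forall x : R, exists! e : R, idem e /\ (x - e \in I \/ x + e \in I).

(* R/I is semi Boolean: every coset x+I satisfies (x+I)^2 = x+I or (x+I)^2 = -(x+I),
   i.e. (unfolding the quotient) x^2 - x \in I or x^2 + x \in I. *)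
Definition quot_semi_boolean {R : pzRingType} (I : {pred R}) : Prop :=
  forall x : R, x * x - x \in I \/ x * x + x \in I.

Definition lift_weakly {R : pzRingType} (I : {pred R}) : Prop :=
  forall x : R, x * x - x \in I ->
    exists e : R, idem e /\ (x - e \in I \/ x + e \in I).

Definition lift_uniquely_weakly {R : pzRingType} (I : {pred R}) : Prop :=
  forall x : R, x * x - x \in I ->
    exists! e : R, idem e /\ (x - e \in I \/ x + e \in I).

Definition central {R : pzRingType} (e : R) : Prop := forall r : R, e * r = r * e.
Definition abelian_ring (R : pzRingType) : Prop := forall e : R, idem e -> central e.

Definition idem_free {R : pzRingType} (I : {pred R}) : Prop :=
  forall e : R, e \in I -> idem e -> e = 0.

(* (1) => (2): if [e] is idempotent and [x - e] lies in [I], then so does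
   [x^2 - x = x (x - e) + (x - e) e - (x - e)].
   (2) => (3): unique lifting forces idempotents that agree modulo [I] to be
   equal. Taking [0] gives idempotent freeness. Since [R/I] is semi Boolean it
   is reduced, so the square-zero elements [e r (1 - e)] and [(1 - e) r e] lie
   in [I]; hence [e] agrees modulo [I] with the idempotents
   [e + e r (1 - e)] and [e + (1 - e) r e], which forces [e r = e r e = r e].
   (3) => (4): lift [a] or [-a], whichever is idempotent modulo [I].
   (4) => (1): two idempotents [g], [e] congruent to [a] up to sign satisfy
   [g - e] or [g + e] in [I]; if they commute, [g + e] in [I] already gives
   [g - e = g (g + e) - e (g + e)] in [I]. Then [g (1 - e)] and [e (1 - g)]
   are idempotents of [I], hence zero, so [g = g e = e g = e]. *)
From HB Require Import structures.
From mathcomp Require Import all_boot all_order all_algebra.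
Import GRing.Theory.
Local Open Scope ring_scope.
Set Implicit Arguments.

Lemma idemC (R : pzRingType) (e : R) : idem e -> idem (1 - e).
Proof. by move=> he; rewrite /idem mulrBl mul1r mulrBr mulr1 he !subrr subr0. Qed.

Lemma idemM (R : pzRingType) (e f : R) :
  idem e -> idem f -> f * e = e * f -> idem (e * f).
Proof. by move=> he hf efC; rewrite /idem mulrA -(mulrA e) efC mulrA he -mulrA hf. Qed.

Lemma idem_peirce_r (R : pzRingType) (e r : R) :
  idem e -> idem (e + e * r * (1 - e)).
Proof.
move=> he; set a := e * r * (1 - e).
have ea : e * a = a by rewrite /a !mulrA he.
have ae : a * e = 0 by rewrite /a -mulrA mulrBl mul1r he subrr mulr0.
have aa : a * a = 0 by rewrite {2}/a !mulrA ae !mul0r.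
by rewrite /idem mulrDl !mulrDr he ea ae aa !addr0.
Qed.

Lemma idem_peirce_l (R : pzRingType) (e r : R) :
  idem e -> idem (e + (1 - e) * r * e).
Proof.
move=> he; set a := (1 - e) * r * e.
have ea : e * a = 0 by rewrite /a !mulrA mulrBr mulr1 he subrr !mul0r.
have ae : a * e = a by rewrite /a -mulrA he.
have aa : a * a = 0 by rewrite {1}/a -!mulrA ea !mulr0.
by rewrite /idem mulrDl !mulrDr he ea ae aa !addr0.
Qed.

Definition weak_congr {R : pzRingType} (I : {pred R}) (a e : R) : Prop :=
  a - e \in I \/ a + e \in I.

Definition idem_rigid {R : pzRingType} (I : {pred R}) : Prop :=
  forall e f : R, idem e -> idem f -> e - f \in I -> e = f.

Section Ideal.

Variables (R : pzRingType) (I : {pred R}).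
Hypothesis hI : is_ideal I.

Lemma ideal0 : 0 \in I.
Proof. by case: hI. Qed.

Lemma idealB x y : x \in I -> y \in I -> x - y \in I.
Proof. by case: hI => _ hB _ _; apply: hB. Qed.

Lemma idealN x : x \in I -> - x \in I.
Proof. by move=> hx; rewrite -sub0r idealB ?ideal0. Qed.

Lemma idealD x y : x \in I -> y \in I -> x + y \in I.
Proof. by move=> hx hy; rewrite -[y]opprK idealB ?idealN. Qed.

Lemma idealMl r x : x \in I -> r * x \in I.
Proof. by case: hI => _ _ hM _; apply: hM. Qed.

Lemma idealMr r x : x \in I -> x * r \in I.
Proof. by case: hI => _ _ _ hM; apply: hM. Qed.

Lemma idem_sqrB_mem e x : idem e -> x - e \in I -> x * x - x \in I.
Proof.
move=> he hxe.
have -> : x * x - x = x * (x - e) + (x - e) * e - (x - e).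
  by rewrite mulrBr !mulrBl he addrA subrK opprB addrA subrK.
by apply: idealB => //; apply: idealD; [apply: idealMl | apply: idealMr].
Qed.

Lemma idem_sqrD_mem e x : idem e -> x + e \in I -> x * x + x \in I.
Proof.
move=> he hxe.
have -> : x * x + x = x * (x + e) - (x + e) * e + (x + e).
  by rewrite mulrDr !mulrDl he opprD !addrA addrK (addrAC _ (- e) x) subrK.
by apply: idealD => //; apply: idealB; [apply: idealMl | apply: idealMr].
Qed.

Lemma weakly_clean_semi_boolean :
  (forall x : R, exists e, idem e /\ weak_congr I x e) -> quot_semi_boolean I.
Proof.
move=> hwc x; have [e [he [hxe | hxe]]] := hwc x.
- by left; apply: idem_sqrB_mem hxe.
- by right; apply: idem_sqrD_mem hxe.
Qed.

Lemma weak_congrN a e : weak_congr I (- a) e -> weak_congr I a e.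
Proof.
case=> h; [right; rewrite -[a + e]opprK opprD | left; rewrite -[a - e]opprK opprB addrC];
  exact: idealN.
Qed.

Lemma weak_congr_sym_trans a e f :
  weak_congr I a e -> weak_congr I a f -> weak_congr I f e.
Proof.
case=> hae [] haf.
- by left; rewrite -(subrKA a) -opprB; apply: idealD (idealN haf) hae.
- by right; rewrite addrC -(subrKA a) -opprB; apply: idealD (idealN hae) haf.
- by right; rewrite -(subrKA a) -opprB; apply: idealD (idealN haf) hae.
- by left; rewrite -(addrKA a) (addrC f); apply: idealB haf hae.
Qed.

Lemma semi_boolean_lift_weakly_clean :
  quot_semi_boolean I -> lift_weakly I ->
  forall a : R, exists e, idem e /\ weak_congr I a e.
Proof.
move=> hsb hlw a; case: (hsb a) => ha; first exact: hlw.
have [e [he hae]] : exists e, idem e /\ weak_congr I (- a) e.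
  by apply: hlw; rewrite mulrNN opprK.
by exists e; split; last exact: weak_congrN.
Qed.

Lemma semi_boolean_sqr_mem y : quot_semi_boolean I -> y * y \in I -> y \in I.
Proof.
move=> hsb hyy; case: (hsb y) => h.
- by rewrite -[y](subKr (y * y)) idealB.
- by rewrite -[y](addKr (y * y)) idealD ?idealN.
Qed.

Lemma semi_boolean_peirce_r e r :
  quot_semi_boolean I -> idem e -> e * r * (1 - e) \in I.
Proof.
move=> hsb he; apply: semi_boolean_sqr_mem => //.
by rewrite -!mulrA (mulrA (1 - e)) mulrBl mul1r he subrr !(mul0r, mulr0) ideal0.
Qed.

Lemma semi_boolean_peirce_l e r :
  quot_semi_boolean I -> idem e -> (1 - e) * r * e \in I.
Proof.
move=> hsb he; apply: semi_boolean_sqr_mem => //.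
by rewrite -!mulrA (mulrA e) mulrBr mulr1 he subrr !(mul0r, mulr0) ideal0.
Qed.

Lemma lift_uniquely_idem_rigid : lift_uniquely_weakly I -> idem_rigid I.
Proof.
move=> hlu e f he hf hef.
have hee : e * e - e \in I by rewrite he subrr ideal0.
have [g [_ hg]] := hlu e hee.
have <- : g = e by apply: hg; split=> //; left; rewrite subrr ideal0.
by apply: hg; split=> //; left.
Qed.

Lemma idem_rigid_idem_free : idem_rigid I -> idem_free I.
Proof.
move=> hrig e heI he; apply: hrig => //; first exact: mulr0.
by rewrite subr0.
Qed.

Lemma semi_boolean_idem_rigid_abelian :
  quot_semi_boolean I -> idem_rigid I -> abelian_ring R.
Proof.
move=> hsb hrig e he r.
have peirce0 a : idem (e + a) -> a \in I -> a = 0.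
  move=> hea haI; apply: (addrI e); rewrite addr0; apply/esym/hrig => //.
  by rewrite opprD addrA subrr add0r idealN.
have er : e * r = e * r * e.
  apply: subr0_eq; rewrite -{1}[e * r]mulr1 -mulrBr.
  exact: peirce0 (idem_peirce_r r he) (semi_boolean_peirce_r r hsb he).
have re : r * e = e * r * e.
  apply: subr0_eq; rewrite -[X in X - _]mul1r mulrA -!mulrBl.
  exact: peirce0 (idem_peirce_l r he) (semi_boolean_peirce_l r hsb he).
by rewrite er re.
Qed.

Lemma commute_idem_weak_congr_subr_mem e g :
  idem e -> idem g -> e * g = g * e -> weak_congr I g e -> g - e \in I.
Proof.
move=> he hg ceg; case=> // hgeI.
have -> : g - e = g * (g + e) - e * (g + e).
  by rewrite !mulrDr hg he ceg opprD addrA addrK.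
by apply: idealB; apply: idealMl.
Qed.

Lemma idem_free_commute_idem_eq e g :
  idem_free I -> idem e -> idem g -> e * g = g * e -> g - e \in I -> g = e.
Proof.
move=> hif he hg ceg hgeI.
have absorb x y : idem x -> idem y -> x * y = y * x -> x - y \in I -> x = x * y.
  move=> hx hy cxy hxyI; apply: subr0_eq; rewrite -{1}[x]mulr1 -mulrBr.
  apply: hif; last by apply: idemM (idemC hy) _; rewrite // mulrBl mulrBr mul1r mulr1 cxy.
  by rewrite mulrBr mulr1 -{1}hx -mulrBr; apply: idealMl.
rewrite (absorb g e) // -ceg -(absorb e g) //.
by rewrite -opprB; apply: idealN.
Qed.

End Ideal.

Theorem mainTheorem10 (R : pzRingType) (I : {pred R}) (hI : is_ideal I) :
  [<-> uniquely_weakly_clean I;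
       quot_semi_boolean I /\ lift_uniquely_weakly I;
       [/\ quot_semi_boolean I, lift_weakly I, abelian_ring R & idem_free I];
       (forall a : R, exists e : R, [/\ idem e, central e & (a - e \in I \/ a + e \in I)])
         /\ idem_free I].
Proof.
tfae.
- move=> huwc; split; last by move=> x _; apply: huwc.
  by apply: weakly_clean_semi_boolean => // x; have [e [? _]] := huwc x; exists e.
- case=> hsb hlu; have hrig := lift_uniquely_idem_rigid hI hlu.
  split=> //; last exact: idem_rigid_idem_free.
  + by move=> x hx; have [e [? _]] := hlu x hx; exists e.
  + exact: semi_boolean_idem_rigid_abelian hI hsb hrig.
- case=> hsb hlw hab hif; split=> // a.
  have [e [he hae]] := semi_boolean_lift_weakly_clean hI hsb hlw a.
  by exists e; split; [| apply: hab |].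
- case=> hcent hif x; have [e [he ce hxe]] := hcent x.
  exists e; split=> // f [hf hxf]; apply/esym.
  apply: (idem_free_commute_idem_eq hI hif he hf (ce f)).
  apply: (commute_idem_weak_congr_subr_mem hI he hf (ce f)).
  exact: (weak_congr_sym_trans hI hxe hxf).
Qed.
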